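(* In the setting below, fix an assignment matrix $A$ for which event $\mathcal A$ holds. Then $$\mu^*(P^* )\ \ge\ \frac{\gamma}{3e^{2\kappa}} .$$
   Context: Setting. Let $n\ge1$ (number of users) and $m\ge2$ (number of items). Fix user parameters $\theta^*_1,\dots,\theta^*_n\in\mathbb R$ and item parameters $\beta^*_1,\dots,\beta^*_m\in\mathbb R$. Write $w^*_i=e^{\beta^*_i}$, $\kappa=\max_i\beta^*_i-\min_i\beta^*_i$, and $\pi^*_i=w^*_i/\sum_{k=1}^m w^*_k$. The responses $X_{li}\in\{0,1\}$ are independent with $\Pr(X_{li}=1)=e^{\theta^*_l}/(e^{\theta^*_l}+e^{\beta^*_i})$. Let $\gamma=\min_{l\in[n],\,i\ne j\in[m]}\mathbb E[X_{li}(1-X_{lj})]$. For an assignment matrix $A\in\{0,1\}^{n\times m}$ and $p\in(0,1]$, let $B=A^\top A$, $d=\frac32mnp^2$, and define $P^*_{ij}=\frac1d\sum_{l=1}^nA_{li}A_{lj}\mathbb E[X_{li}(1-X_{lj})]$ for $i\ne j$, $P^*_{ii}=1-\sum_{k\ne i}P^*_{ik}$; $P^*$ is reversible with respect to $\pi^*$. Event $\mathcal A$: $\frac12np^2\le B_{ij}\le\frac32np^2$ for all $i\ne j$. For a stochastic matrix $M$ reversible with respect to a positive probability vector (so its eigenvalues are real, $1=\lambda_1\ge\lambda_2\ge\dots\ge\lambda_m$), the spectral gap is $\mu^*(M)=1-\max\{|\lambda_2|,|\lambda_m|\}$. *)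

From HB Require Import structures.
From mathcomp Require Import all_boot all_order all_algebra.
From mathcomp Require Import all_classical all_reals all_analysis.
Set Implicit Arguments. Unset Strict Implicit. Unset Printing Implicit Defensive.
Import Order.TTheory GRing.Theory Num.Theory.
Local Open Scope ring_scope.

Section Model.
Variables (R : realType) (n m : nat).
Variables (theta : 'I_n -> R) (beta : 'I_m -> R).

Definition resp_prob (l : 'I_n) (i : 'I_m) : R :=
  expR (theta l) / (expR (theta l) + expR (beta i)).

(* E[X_li (1 - X_lj)] for i <> j; by independence of X_li and X_lj
   this equals Pr(X_li=1) * (1 - Pr(X_lj=1)). *)
Definition cross_exp (l : 'I_n) (i j : 'I_m) : R :=
  resp_prob l i * (1 - resp_prob l j).

(* kappa = max_i beta_i - min_i beta_i = max over pairs (i,j) of beta_i - beta_j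
   (the pair i = j gives 0, so the default value 0 of the big max is harmless). *)
Definition kappa : R :=
  \big[Num.max/0]_(i < m) \big[Num.max/0]_(j < m) (beta i - beta j).

(* gamma = min over l, i <> j of E[X_li (1 - X_lj)]; the default 1 is
   harmless since every such value is < 1 and the index set is nonempty
   when n >= 1 and m >= 2. *)
Definition gamma : R :=
  \big[Num.min/1]_(l < n) \big[Num.min/1]_(i < m)
     \big[Num.min/1]_(j < m | i != j) cross_exp l i j.

Variables (A : 'I_n -> 'I_m -> bool) (p : R).

Definition Bmat : 'M[R]_m :=
  \matrix_(i, j) \sum_(l < n) ((A l i)%:R * (A l j)%:R).

Definition dnorm : R := 3 / 2 * m%:R * n%:R * p ^+ 2.

Definition Poff (i j : 'I_m) : R :=
  dnorm^-1 * \sum_(l < n) ((A l i)%:R * (A l j)%:R * cross_exp l i j).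

Definition Pstar : 'M[R]_m :=
  \matrix_(i, j) if i == j then 1 - \sum_(k < m | k != i) Poff i k
                 else Poff i j.

Definition eventA : Prop :=
  forall i j : 'I_m, i != j ->
    1 / 2 * n%:R * p ^+ 2 <= Bmat i j <= 3 / 2 * n%:R * p ^+ 2.

End Model.

(* s is the list of eigenvalues of M (roots of the characteristic polynomial,
   counted with multiplicity), all real, sorted nonincreasingly:
   s = [lambda_1; ...; lambda_m]. *)
Definition eigen_seq (R : realType) (k : nat) (M : 'M[R]_k) (s : seq R) : Prop :=
  [/\ size s = k, sorted (fun x y : R => y <= x) s &
      char_poly M = \prod_(x <- s) ('X - x%:P)].

(* spectral gap 1 - max(|lambda_2|, |lambda_m|) from the sorted eigenvalue list *)
Definition spectral_gap_of (R : realType) (k : nat) (s : seq R) : R :=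
  1 - Num.max `|s`_1| `|s`_(k.-1)|.

From HB Require Import structures.
From mathcomp Require Import all_boot all_order all_algebra.
From mathcomp Require Import all_classical all_reals all_analysis.
From mathcomp Require Import complex.
From mathcomp Require Import ring lra.
Set Implicit Arguments. Unset Strict Implicit. Unset Printing Implicit Defensive.
Import Order.TTheory GRing.Theory Num.Theory.
Local Open Scope ring_scope.

(* Reversibility of P* with respect to w_i = e^{beta_i} makes it
   similar, through D = diag (sqrt w), to a symmetric matrix S, so the spectrum
   is real and is controlled by the quadratic forms of 1 + S and 1 - S, i.e. by
   the Dirichlet form of P* in L^2(w).  Since P*_ii >= gamma, the form of 1 + S
   is at least 2 gamma, so every eigenvalue is >= -1 + 2 gamma.  Under event A
   every off-diagonal entry is >= gamma / (3m), while pi_j <= e^{2 kappa} / m;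
   comparing P* with the chain that jumps straight to its stationary law pi
   (a Poincare inequality) shows that the form of 1 - S is at least
   gamma / (3 e^{2 kappa}) on the orthogonal complement of sqrt w.  By the
   min-max principle at most one eigenvalue then exceeds
   1 - gamma / (3 e^{2 kappa}), which bounds lambda_2 from above. *)

Lemma char_poly_conj (F : fieldType) (k : nat) (U D : 'M[F]_k) :
  U \in unitmx -> char_poly (invmx U *m D *m U) = char_poly D.
Proof.
move=> Uu; rewrite /char_poly /char_poly_mx.
have VU : map_mx (@polyC F) (invmx U) *m map_mx polyC U = 1%:M.
  by rewrite -map_mxM mulVmx // map_mx1.
have -> : 'X%:M - map_mx polyC (invmx U *m D *m U) =
  map_mx polyC (invmx U) *m ('X%:M - map_mx polyC D) *m map_mx polyC U.
  by rewrite mulmxBr mulmxBl !map_mxM mul_mx_scalar -scalemxAl VU scalemx1.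
by rewrite !det_mulmx mulrAC -det_mulmx VU det1 mul1r.
Qed.

Section RealSymmetric.
Variable R : realType.
Local Notation C := R[i].
Local Notation toC := (real_complex R).
Local Notation ReC := (@complex.Re R).
Local Notation ImC := (@complex.Im R).

Definition qform k (M : 'M[R]_k) (x : 'rV[R]_k) : R := (x *m M *m x^T) 0 0.

Lemma qformD k (M N : 'M[R]_k) x : qform (M + N) x = qform M x + qform N x.
Proof. by rewrite /qform mulmxDr mulmxDl mxE. Qed.

Lemma qformB k (M N : 'M[R]_k) x : qform (M - N) x = qform M x - qform N x.
Proof. by rewrite /qform mulmxBr mulmxBl !mxE. Qed.

Lemma qformE k (M : 'M[R]_k) x :
  qform M x = \sum_i \sum_j x 0 i * M i j * x 0 j.
Proof.
rewrite /qform mxE exchange_big; apply: eq_bigr => j _.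
by rewrite !mxE mulr_suml.
Qed.

Lemma qform1 k (x : 'rV[R]_k) : qform 1%:M x = \sum_i x 0 i ^+ 2.
Proof. by rewrite /qform mulmx1 mxE; apply: eq_bigr => i _; rewrite mxE expr2. Qed.

Lemma qform1_ge0 k (x : 'rV[R]_k) : 0 <= qform 1%:M x.
Proof. by rewrite qform1; apply: sumr_ge0 => i _; exact: sqr_ge0. Qed.

Lemma realsym_spectral k (S : 'M[R]_k) : S^T = S ->
  exists (U : 'M[C]_k) (d : 'I_k -> R),
   [/\ U \is unitarymx,
       forall j, row j U *m map_mx toC S = toC (d j) *: row j U &
       char_poly S = \prod_(j < k) ('X - (d j)%:P)].
Proof.
move=> Ssym; set A := map_mx toC S.
have Aherm : A \is hermsymmx.
  apply: realsym_hermsym.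
    by apply/is_hermitianmxP; rewrite expr0 scale1r map_mx_id // /A map_trmx Ssym.
  by apply/mxOverP => i j; rewrite mxE; apply/complex_realP; exists (S i j).
have /orthomx_spectralP AE := hermitian_normalmx Aherm.
set U := spectralmx A in AE; set sp := spectral_diag A in AE.
have spE j : sp 0 j = toC (ReC (sp 0 j)).
  by rewrite RRe_real // (mxOverP (hermitian_spectral_diag_real Aherm)).
exists U, (fun j => ReC (sp 0 j)); split; first exact: spectral_unitarymx.
- move=> j; have UA : U *m A = diag_mx sp *m U.
    by rewrite {1}AE !mulmxA mulmxV ?mul1mx // spectral_unit.
  by rewrite -row_mul UA row_mul row_diag_mx -scalemxAl -rowE -spE.
- apply: (@map_poly_inj _ _ toC); rewrite map_char_poly -/A.
  rewrite {1}AE char_poly_conj ?spectral_unit // char_poly_trig ?diag_mx_is_trig //.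
  rewrite rmorph_prod; apply: eq_bigr => j _.
  by rewrite mxE eqxx mulr1n rmorphB /= map_polyX map_polyC /= -spE.
Qed.

Lemma dotmx_real k (x y : 'rV[R]_k) :
  dotmx (map_mx toC x) (map_mx toC y) = toC ((x *m y^T) 0 0).
Proof.
rewrite dotmxE !mxE rmorph_sum; apply: eq_bigr => i _.
by rewrite !mxE rmorphM; congr (_ * _); exact: conjc_real.
Qed.

Lemma row_ReIm k (v : 'rV[C]_k) :
  v = map_mx toC (map_mx ReC v) + 'i *: map_mx toC (map_mx ImC v).
Proof. by apply/matrixP => i j; rewrite !mxE {1}[v i j]complexE complexiE. Qed.

Lemma dotmx_qform k (M : 'M[R]_k) (v : 'rV[C]_k) : M^T = M ->
  dotmx (v *m map_mx toC M) v =
  toC (qform M (map_mx ReC v) + qform M (map_mx ImC v)).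
Proof.
move=> Msym; set a := map_mx ReC v; set b := map_mx ImC v.
have Mswap (x y : 'rV[R]_k) : (x *m M *m y^T) 0 0 = (y *m M *m x^T) 0 0.
  rewrite [LHS](_ : _ = ((x *m M *m y^T)^T) 0 0); last by rewrite [RHS]mxE.
  by rewrite !trmx_mul trmxK Msym mulmxA.
rewrite {1 2}[v]row_ReIm mulmxDl -scalemxAl -!map_mxM.
rewrite !(linearDl, linearDr, linearZl, linearZr) /= !dotmx_real conjCi.
rewrite (Mswap b a) /qform -/a -/b rmorphD /=.
by rewrite mulrA mulrN -expr2 sqrCi opprK mul1r; ring.
Qed.

Lemma dotmx_qform_ge k (M : 'M[R]_k) (g : R) (v : 'rV[C]_k) : M^T = M ->
  g * qform 1%:M (map_mx ReC v) <= qform M (map_mx ReC v) ->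
  g * qform 1%:M (map_mx ImC v) <= qform M (map_mx ImC v) ->
  toC g * dotmx v v <= dotmx (v *m map_mx toC M) v.
Proof.
move=> Msym ha hb; have := dotmx_qform v (trmx1 R k); rewrite map_mx1 mulmx1 => ->.
by rewrite dotmx_qform // -rmorphM lecR mulrDr lerD.
Qed.

Lemma dotmx_real_eq0 k (v : 'rV[C]_k) (u : 'rV[R]_k) :
  dotmx v (map_mx toC u) = 0 ->
  (map_mx ReC v *m u^T) 0 0 = 0 /\ (map_mx ImC v *m u^T) 0 0 = 0.
Proof.
rewrite {1}[v]row_ReIm linearDl linearZl /= !dotmx_real.
by move=> /(congr1 (fun z => (ReC z, ImC z))) /= [h1 h2]; split; lra.
Qed.

End RealSymmetric.

Lemma nontrivial_lincomb_eq0 (F : comNzRingType) (c1 c2 : F) :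
  exists a b : F, ((a != 0) || (b != 0)) /\ a * c1 + b * c2 = 0.
Proof.
have [c10|c1n0] := eqVneq c1 0.
  by exists 1, 0; rewrite oner_eq0 c10 mul0r mulr0 addr0.
by exists c2, (- c1); rewrite oppr_eq0 c1n0 orbT mulNr [c2 * _]mulrC addrN.
Qed.

Section EigenBounds.
Variables (R : realType) (k : nat) (S : 'M[R]_k).
Local Notation C := R[i].
Local Notation toC := (real_complex R).
Variables (U : 'M[C]_k) (d : 'I_k -> R) (g : R).
Hypotheses (S_sym : S^T = S) (U_unitary : U \is unitarymx).
Hypothesis U_eigen : forall j, row j U *m map_mx toC S = toC (d j) *: row j U.

Lemma trmx_1DS : (1%:M + S)^T = 1%:M + S.
Proof. by rewrite linearD /= trmx1 S_sym. Qed.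

Lemma trmx_1BS : (1%:M - S)^T = 1%:M - S.
Proof. by rewrite linearB /= trmx1 S_sym. Qed.

Lemma row_eigen_1DS j :
  row j U *m map_mx toC (1%:M + S) = toC (1 + d j) *: row j U.
Proof.
by rewrite map_mxD map_mx1 mulmxDr mulmx1 U_eigen rmorphD scalerDl scale1r.
Qed.

Lemma row_eigen_1BS j :
  row j U *m map_mx toC (1%:M - S) = toC (1 - d j) *: row j U.
Proof.
by rewrite map_mxB map_mx1 mulmxBr mulmx1 U_eigen rmorphB scalerBl scale1r.
Qed.

Lemma dotmx_rows2 j1 j2 (a1 a2 b1 b2 : C) : j1 != j2 ->
  dotmx (a1 *: row j1 U + a2 *: row j2 U) (b1 *: row j1 U + b2 *: row j2 U) =
  a1 * b1^* + a2 * b2^*.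
Proof.
move=> j12; have j21 : j2 != j1 by rewrite eq_sym.
rewrite !(linearDl, linearDr, linearZl, linearZr) /= !(row_unitarymxP U_unitary).
by rewrite !eqxx (negbTE j12) (negbTE j21) !mulr1 !mulr0 addr0 add0r.
Qed.

Lemma eigen_lower_bound :
  (forall x, g * qform 1%:M x <= qform (1%:M + S) x) -> forall j, -1 + g <= d j.
Proof.
move=> H j; have := dotmx_qform_ge (v := row j U) trmx_1DS (H _) (H _).
rewrite row_eigen_1DS linearZl /= (row_unitarymxP U_unitary) eqxx !mulr1 lecR.
lra.
Qed.

(* Two such eigenvectors would span a vector orthogonal to u on which the form
   of 1 - S is below g. *)
Lemma eigen_large_unique (u : 'rV[R]_k) :
  (forall x, (x *m u^T) 0 0 = 0 -> g * qform 1%:M x <= qform (1%:M - S) x) ->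
  forall j1 j2, 1 - g < d j1 -> 1 - g < d j2 -> j1 = j2.
Proof.
move=> H j1 j2 lt1 lt2; apply/eqP/negPn/negP => j12.
set c1 := dotmx (row j1 U) (map_mx toC u); set c2 := dotmx (row j2 U) (map_mx toC u).
have [al [be [nz perp]]] := nontrivial_lincomb_eq0 c1 c2.
set v := al *: row j1 U + be *: row j2 U.
have [vRe vIm] : (map_mx (@complex.Re R) v *m u^T) 0 0 = 0 /\
    (map_mx (@complex.Im R) v *m u^T) 0 0 = 0.
  by apply: dotmx_real_eq0; rewrite linearDl !linearZl.
have := dotmx_qform_ge (v := v) trmx_1BS (H _ vRe) (H _ vIm).
rewrite {2}/v mulmxDl -!scalemxAl !row_eigen_1BS !scalerA !dotmx_rows2 //.
set A2 := al * al^*; set B2 := be * be^*.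
have gap_pos : 0 < A2 * toC (d j1 - (1 - g)) + B2 * toC (d j2 - (1 - g)).
  have p1 : 0 < toC (d j1 - (1 - g)) by rewrite ltcR subr_gt0.
  have p2 : 0 < toC (d j2 - (1 - g)) by rewrite ltcR subr_gt0.
  have t1 : 0 <= A2 * toC (d j1 - (1 - g)) := mulr_ge0 (mul_conjC_ge0 al) (ltW p1).
  have t2 : 0 <= B2 * toC (d j2 - (1 - g)) := mulr_ge0 (mul_conjC_ge0 be) (ltW p2).
  case/orP: nz => nz.
    by apply: ltr_wpDr t2 _; apply: mulr_gt0 p1; rewrite mul_conjC_gt0.
  by apply: ltr_wpDl t1 _; apply: mulr_gt0 p2; rewrite mul_conjC_gt0.
have -> : toC g * (A2 + B2) =
    al * toC (1 - d j1) * al^* + be * toC (1 - d j2) * be^* +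
    (A2 * toC (d j1 - (1 - g)) + B2 * toC (d j2 - (1 - g))).
  by rewrite /A2 /B2 !rmorphB; ring.
by rewrite gerDl => /(lt_le_trans gap_pos); rewrite ltxx.
Qed.

End EigenBounds.

Lemma count_le1_uniq (T : eqType) (P : pred T) (l : seq T) : uniq l ->
  {in l &, forall x y, P x -> P y -> x = y} -> (count P l <= 1)%N.
Proof.
elim: l => [//|x l IH] /= /andP[xl ul] Pinj.
case Px: (P x) => /=; last first.
  by apply: IH => // y z yl zl; apply: Pinj; rewrite inE ?yl ?zl orbT.
rewrite ltnS leqn0 -(negbK (_ == 0)%N) -lt0n -has_count; apply/hasPn => y yl.
apply/negP => Py; have xy : x = y by apply: Pinj; rewrite ?inE ?eqxx ?yl ?orbT.
by move: xl; rewrite xy yl.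
Qed.

Section SpectralGap.
Variable R : realType.

Lemma spectral_gap_of_ge k (s : seq R) (g : R) : (1 < k)%N -> size s = k ->
  sorted (fun x y => y <= x) s -> {in s, forall x, -1 + g <= x} ->
  (count (fun x : R => (1 - g < x)%R) s <= 1)%N -> g <= spectral_gap_of k s.
Proof.
move=> k_gt1 s_size s_sorted s_lb s_count.
have s1_in : s`_1 \in s by apply: mem_nth; rewrite s_size.
have sk_in : s`_k.-1 \in s by apply: mem_nth; rewrite s_size; case: (k) k_gt1.
(* s`_0 >= s`_1, so both would exceed 1 - g *)
have s1_ub : s`_1 <= 1 - g.
  move: s_size s_sorted s_count; case: s {s1_in sk_in s_lb} => [|x0 [|x1 r]] /=;
    try by move=> s_size; move: k_gt1; rewrite -s_size.
  move=> _ /andP[x10 _]; rewrite leNgt; apply: contraTN => x1_gt.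
  by rewrite (lt_le_trans x1_gt x10) x1_gt.
have sk_le : s`_k.-1 <= s`_1.
  apply: (@sorted_leq_nth _ (fun x y => y <= x) _ _ 0 s s_sorted 1%N k.-1).
  - by move=> y x z hxy hyz; apply: le_trans hyz hxy.
  - by move=> x; apply: lexx.
  - by rewrite inE s_size.
  - by rewrite inE s_size; case: (k) k_gt1.
  - by case: (k) k_gt1 => [|[|k']].
have := s_lb _ s1_in; have := s_lb _ sk_in => skb s1b.
have opp_1Bg : - (1 - g) = -1 + g by rewrite opprB addrC.
rewrite /spectral_gap_of lerBrDr -lerBrDl ge_max !ler_norml opp_1Bg.
by rewrite s1b skb s1_ub (le_trans sk_le s1_ub).
Qed.

Lemma symmetric_spectral_gap k (S : 'M[R]_k) (u : 'rV[R]_k) (g : R) :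
  (1 < k)%N -> S^T = S ->
  (forall x, g * qform 1%:M x <= qform (1%:M + S) x) ->
  (forall x, (x *m u^T) 0 0 = 0 -> g * qform 1%:M x <= qform (1%:M - S) x) ->
  (exists s, eigen_seq S s) /\ (forall s, eigen_seq S s -> g <= spectral_gap_of k s).
Proof.
move=> k_gt1 S_sym H1 H2.
have [U [d [Uu Ueig cpS]]] := realsym_spectral S_sym.
set L := [seq d j | j <- enum 'I_k].
have cpL : char_poly S = \prod_(x <- L) ('X - x%:P) by rewrite cpS big_map big_enum.
split.
  exists (sort (fun x y => y <= x) L); split.
  - by rewrite size_sort size_map size_enum_ord.
  - by apply: sort_sorted => x y; rewrite le_total.
  - by rewrite cpL (perm_big _ (permEl (perm_sort _ L))).
move=> s [s_size s_sorted cps].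
have sL : perm_eq s L by apply: prod_XsubC_eq; rewrite -cps cpL.
apply: spectral_gap_of_ge => //.
  move=> x; rewrite (perm_mem sL) => /mapP [j _ ->].
  exact: eigen_lower_bound S_sym Uu Ueig H1 j.
rewrite (permP sL) count_map; apply: count_le1_uniq; first exact: enum_uniq.
by move=> j1 j2 _ _ h1 h2; have := eigen_large_unique S_sym Uu Ueig H2 h1 h2.
Qed.

End SpectralGap.

Lemma weighted_sqr_diff_sum (R : comNzRingType) (I : finType) (w y : I -> R) :
  \sum_i w i * y i = 0 ->
  \sum_i \sum_j w i * w j * (y i - y j) ^+ 2 =
  2 * (\sum_i w i) * \sum_i w i * y i ^+ 2.
Proof.
move=> wy0.
transitivity (\sum_i \sum_j (w i * y i ^+ 2) * w j + \sum_i \sum_j w i * (w j * y j ^+ 2)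
   - 2 * \sum_i \sum_j (w i * y i) * (w j * y j)).
  rewrite mulr_sumr -big_split -sumrB /=; apply: eq_bigr => i _.
  by rewrite mulr_sumr -big_split -sumrB /=; apply: eq_bigr => j _; ring.
by rewrite -!big_distrlr /= wy0; ring.
Qed.

Section ReversibleChain.
Variables (R : realType) (m : nat) (P : 'M[R]_m) (w : 'I_m -> R) (a b : R).
Hypotheses (m_gt1 : (1 < m)%N) (w_gt0 : forall i, 0 < w i).
Hypotheses (P_ge0 : forall i j, 0 <= P i j) (P_row1 : forall i, \sum_j P i j = 1).
Hypothesis P_rev : forall i j, w i * P i j = w j * P j i.
Hypothesis P_diag : forall i, a <= P i i.
(* i.e. P i j >= b * pi j for the stationary law pi := w / \sum_k w k *)
Hypothesis P_off : forall i j, i != j -> b * w j <= (\sum_k w k) * P i j.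

Let h i := Num.sqrt (w i).

Let h_neq0 i : h i != 0.
Proof. by rewrite lt0r_neq0 // sqrtr_gt0. Qed.

Let hh i : h i * h i = w i.
Proof. by rewrite -expr2 sqr_sqrtr // ltW. Qed.

Definition wnorm (y : 'I_m -> R) := \sum_i w i * y i ^+ 2.
Definition wform (y : 'I_m -> R) := \sum_i \sum_j w i * P i j * (y i * y j).

Let w_sqr_ge0 i z : 0 <= w i * z ^+ 2.
Proof. exact: mulr_ge0 (ltW (w_gt0 i)) (sqr_ge0 z). Qed.

Lemma dirichlet_sqr_l y : \sum_i \sum_j w i * P i j * y i ^+ 2 = wnorm y.
Proof.
apply: eq_bigr => i _.
by rewrite -[RHS]mulr1 -(P_row1 i) !mulr_sumr; apply: eq_bigr => j _; ring.
Qed.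

Lemma dirichlet_sqr_r y : \sum_i \sum_j w i * P i j * y j ^+ 2 = wnorm y.
Proof.
rewrite exchange_big -dirichlet_sqr_l; apply: eq_bigr => j _; apply: eq_bigr => i _.
by rewrite P_rev.
Qed.

Lemma dirichlet_diff y :
  \sum_i \sum_j w i * P i j * (y i - y j) ^+ 2 = 2 * (wnorm y - wform y).
Proof.
transitivity (\sum_i \sum_j w i * P i j * y i ^+ 2 + \sum_i \sum_j w i * P i j * y j ^+ 2
   - 2 * \sum_i \sum_j w i * P i j * (y i * y j)).
  rewrite mulr_sumr -big_split -sumrB /=; apply: eq_bigr => i _.
  by rewrite mulr_sumr -big_split -sumrB /=; apply: eq_bigr => j _; ring.
by rewrite dirichlet_sqr_l dirichlet_sqr_r /wform; ring.
Qed.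

Lemma dirichlet_sum y :
  \sum_i \sum_j w i * P i j * (y i + y j) ^+ 2 = 2 * (wnorm y + wform y).
Proof.
transitivity (\sum_i \sum_j w i * P i j * y i ^+ 2 + \sum_i \sum_j w i * P i j * y j ^+ 2
   + 2 * \sum_i \sum_j w i * P i j * (y i * y j)).
  rewrite mulr_sumr -!big_split /=; apply: eq_bigr => i _.
  by rewrite mulr_sumr -!big_split /=; apply: eq_bigr => j _; ring.
by rewrite dirichlet_sqr_l dirichlet_sqr_r /wform; ring.
Qed.

(* only the diagonal terms of the Dirichlet sum are kept *)
Lemma wform_lower y : 2 * a * wnorm y <= wnorm y + wform y.
Proof.
have : \sum_i 4 * a * (w i * y i ^+ 2) <=
    \sum_i \sum_j w i * P i j * (y i + y j) ^+ 2.
  apply: ler_sum => i _; rewrite (bigD1 i) //=; apply: ler_wpDr.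
    apply: sumr_ge0 => j _; apply: mulr_ge0 (sqr_ge0 _).
    exact: mulr_ge0 (ltW (w_gt0 i)) (P_ge0 i j).
  have -> : w i * P i i * (y i + y i) ^+ 2 = 4 * (w i * y i ^+ 2) * P i i by ring.
  rewrite mulrAC; apply: ler_wpM2l (P_diag i).
  by rewrite mulr_ge0.
by rewrite -mulr_sumr -/(wnorm y) dirichlet_sum; nra.
Qed.

(* comparison with the chain that jumps straight to the stationary distribution *)
Lemma wform_upper y : \sum_i w i * y i = 0 -> b * wnorm y <= wnorm y - wform y.
Proof.
move=> wy0; set W := \sum_i w i.
have W_gt0 : 0 < W.
  rewrite /W (bigD1 (Ordinal (ltnW m_gt1))) //=; apply: ltr_pwDl (w_gt0 _) _.
  by apply: sumr_ge0 => j _; exact: ltW.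
have : b * (2 * W * wnorm y) <= W * (2 * (wnorm y - wform y)).
  rewrite -weighted_sqr_diff_sum // -dirichlet_diff !mulr_sumr.
  apply: ler_sum => i _; rewrite !mulr_sumr; apply: ler_sum => j _.
  have [<-|ij] := eqVneq i j; first by rewrite subrr expr0n !mulr0.
  have -> : b * (w i * w j * (y i - y j) ^+ 2) = b * w j * (w i * (y i - y j) ^+ 2).
    by ring.
  have -> : W * (w i * P i j * (y i - y j) ^+ 2) = W * P i j * (w i * (y i - y j) ^+ 2).
    by ring.
  by apply: ler_wpM2r; [exact: w_sqr_ge0 | exact: P_off].
have -> : b * (2 * W * wnorm y) = (2 * W) * (b * wnorm y) by ring.
have -> : W * (2 * (wnorm y - wform y)) = (2 * W) * (wnorm y - wform y) by ring.
by rewrite ler_pM2l // mulr_gt0.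
Qed.

Definition Psym : 'M[R]_m := \matrix_(i, j) (h i * P i j / h j).

Lemma Psym_sym : Psym^T = Psym.
Proof.
apply/matrixP => i j; rewrite !mxE.
have e (k l : 'I_m) : h k * P k l / h l = w k * P k l / (h k * h l).
  by rewrite -hh; field; rewrite !h_neq0.
by rewrite !e P_rev [h j * _]mulrC.
Qed.

Lemma char_poly_Psym : char_poly P = char_poly Psym.
Proof.
set V := diag_mx (\row_i h i); set V' := diag_mx (\row_i (h i)^-1).
have V'V : V' *m V = 1%:M.
  apply/matrixP => i j; rewrite mul_diag_mx !mxE.
  by have [->|ij] := eqVneq i j; rewrite ?mulr1n ?mulVf ?mulr0n ?mulr0.
have [_ Vu] := mulmx1_unit V'V.
have -> : P = invmx V *m Psym *m V.
  have -> : invmx V = V' by rewrite -[invmx V]mul1mx -V'V -mulmxA mulmxV ?mulmx1.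
  apply/matrixP => i j; rewrite mul_mx_diag mul_diag_mx !mxE.
  by field; rewrite !h_neq0.
exact: char_poly_conj.
Qed.

Let y_of (x : 'rV[R]_m) i := x 0 i / h i.

Lemma qform1_wnorm x : qform 1%:M x = wnorm (y_of x).
Proof. by rewrite qform1; apply: eq_bigr => i _; rewrite -hh /y_of; field. Qed.

Lemma qform_Psym x : qform Psym x = wform (y_of x).
Proof.
rewrite qformE; apply: eq_bigr => i _; apply: eq_bigr => j _.
by rewrite mxE -!hh /y_of; field; rewrite !h_neq0.
Qed.

Lemma qform_1DPsym_ge x : 2 * a * qform 1%:M x <= qform (1%:M + Psym) x.
Proof. by rewrite qformD qform1_wnorm qform_Psym wform_lower. Qed.

Lemma qform_1BPsym_ge x :
  (x *m (\row_i h i)^T) 0 0 = 0 -> b * qform 1%:M x <= qform (1%:M - Psym) x.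
Proof.
move=> x_orth; rewrite qformB qform1_wnorm qform_Psym wform_upper //.
rewrite -[RHS]x_orth mxE; apply: eq_bigr => i _; rewrite !mxE -hh /y_of.
by field.
Qed.

Theorem reversible_spectral_gap :
  (exists s, eigen_seq P s) /\
  (forall s, eigen_seq P s -> Num.min (2 * a) b <= spectral_gap_of m s).
Proof.
set g := Num.min (2 * a) b.
have qform_scale (c : R) (x : 'rV[R]_m) : g <= c -> g * qform 1%:M x <= c * qform 1%:M x.
  by move=> gc; rewrite ler_wpM2r // qform1_ge0.
have g_le2a : g <= 2 * a by rewrite ge_min lexx.
have g_leb : g <= b by rewrite ge_min lexx orbT.
have := symmetric_spectral_gap (u := \row_i h i) m_gt1 Psym_sym
  (fun x => le_trans (qform_scale _ x g_le2a) (qform_1DPsym_ge x))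
  (fun x hx => le_trans (qform_scale _ x g_leb) (qform_1BPsym_ge hx)).
by rewrite /eigen_seq char_poly_Psym.
Qed.

End ReversibleChain.

Section RaschModel.
Variables (R : realType) (n m : nat) (theta : 'I_n -> R) (beta : 'I_m -> R).
Variables (A : 'I_n -> 'I_m -> bool) (p : R).

Local Notation rp := (resp_prob theta beta).
Local Notation ce := (cross_exp theta beta).
Local Notation gam := (gamma theta beta).
Local Notation kap := (kappa beta).
Local Notation P := (Pstar theta beta A p).
Local Notation Po := (Poff theta beta A p).
Local Notation w i := (expR (beta i)).

Lemma resp_prob_gt0 l i : 0 < rp l i.
Proof. by rewrite divr_gt0 ?addr_gt0 ?expR_gt0. Qed.

Lemma resp_prob_lt1 l i : rp l i < 1.
Proof. by rewrite ltr_pdivrMr ?addr_gt0 ?expR_gt0 // mul1r ltrDl expR_gt0. Qed.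

Lemma cross_exp_gt0 l i j : 0 < ce l i j.
Proof. by rewrite mulr_gt0 ?resp_prob_gt0 // subr_gt0 resp_prob_lt1. Qed.

Lemma cross_exp_sym_le1 l i j : ce l i j + ce l j i <= 1.
Proof.
rewrite /cross_exp; have := resp_prob_gt0 l i; have := resp_prob_lt1 l i.
have := resp_prob_gt0 l j; have := resp_prob_lt1 l j; nra.
Qed.

Lemma cross_exp_rev l i j : w i * ce l i j = w j * ce l j i.
Proof.
rewrite /cross_exp /resp_prob.
have e1 := expR_gt0 (theta l); have e2 := expR_gt0 (beta i).
have e3 := expR_gt0 (beta j).
by field; rewrite !lt0r_neq0 ?addr_gt0.
Qed.

Lemma gamma_le_cross l i j : i != j -> gam <= ce l i j.
Proof.
move=> ij; apply: le_trans (bigmin_le _ l _) _.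
by apply: le_trans (bigmin_le _ i _) _; exact: bigmin_le_cond.
Qed.

Lemma gamma_gt0 : 0 < gam.
Proof.
apply: lt_bigmin => // l _; apply: lt_bigmin => // i _.
by apply: lt_bigmin => // j _; exact: cross_exp_gt0.
Qed.

Lemma cross_le_1Bgamma l i j : i != j -> ce l i j <= 1 - gam.
Proof.
move=> ij; have := cross_exp_sym_le1 l i j.
have : gam <= ce l j i by rewrite gamma_le_cross // eq_sym.
lra.
Qed.

Lemma kappa_ge i j : beta i - beta j <= kap.
Proof. exact: le_trans (le_bigmax _ _ j) (le_bigmax _ _ i). Qed.

Lemma expR_beta_le i j : w i <= expR (2 * kap) * w j.
Proof.
rewrite -expRD ler_expR; have := kappa_ge i j; have := kappa_ge j j.
rewrite subrr; lra.
Qed.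

Hypotheses (n_gt0 : (0 < n)%N) (m_gt1 : (1 < m)%N) (p_gt0 : 0 < p).
Hypothesis hA : eventA A p.

Let m_gt0 : 0 < m%:R :> R.
Proof. by rewrite ltr0n; case: (m) m_gt1. Qed.

Lemma kappa_ge0 : 0 <= kap.
Proof.
by have := kappa_ge (Ordinal (ltnW m_gt1)) (Ordinal (ltnW m_gt1)); rewrite subrr.
Qed.

Lemma gap_bound_le_twice_gamma : gam / (3 * expR (2 * kap)) <= 2 * gam.
Proof.
have g_gt0 := gamma_gt0.
have K_ge1 : 1 <= expR (2 * kap).
  by rewrite -[X in X <= _]expR0 ler_expR; have := kappa_ge0; lra.
rewrite ler_pdivrMr; last by rewrite mulr_gt0 ?expR_gt0.
nra.
Qed.

Lemma gamma_le_half : gam <= 1 / 2.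
Proof.
have ne : Ordinal (ltnW m_gt1) != Ordinal m_gt1 by [].
have := cross_le_1Bgamma (Ordinal n_gt0) ne.
have := gamma_le_cross (Ordinal n_gt0) ne.
lra.
Qed.

Let oneBgamma_ge0 : 0 <= 1 - gam.
Proof. by have := gamma_le_half; lra. Qed.

Let dnorm_gt0 : 0 < dnorm n m p.
Proof.
have n_pos : 0 < n%:R :> R by rewrite ltr0n.
apply: mulr_gt0 (exprn_gt0 _ p_gt0); apply: mulr_gt0 n_pos.
by apply: mulr_gt0 m_gt0; lra.
Qed.

Lemma Poff_ge i j : i != j -> gam / (3 * m%:R) <= Po i j.
Proof.
move=> ij; have /andP[hB _] := hA ij.
have s1 : gam * Bmat R A i j <= \sum_(l < n) (A l i)%:R * (A l j)%:R * ce l i j.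
  rewrite /Bmat mxE mulr_sumr; apply: ler_sum => l _; rewrite mulrC.
  by apply: ler_wpM2l; [rewrite mulr_ge0 | exact: gamma_le_cross].
have s2 : gam * (1 / 2 * n%:R * p ^+ 2) <= gam * Bmat R A i j.
  by rewrite ler_wpM2l // ltW // gamma_gt0.
have -> : gam / (3 * m%:R) = (dnorm n m p)^-1 * (gam * (1 / 2 * n%:R * p ^+ 2)).
  rewrite /dnorm; field.
  by rewrite (lt0r_neq0 p_gt0) (lt0r_neq0 m_gt0) pnatr_eq0 -lt0n n_gt0.
by apply: ler_wpM2l (le_trans s2 s1); rewrite invr_ge0 ltW.
Qed.

Lemma Poff_le i j : i != j -> Po i j <= (1 - gam) / m%:R.
Proof.
move=> ij; have /andP[_ hB] := hA ij.
have s1 : \sum_(l < n) (A l i)%:R * (A l j)%:R * ce l i j <= (1 - gam) * Bmat R A i j.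
  rewrite /Bmat mxE mulr_sumr; apply: ler_sum => l _; rewrite [X in _ <= X]mulrC.
  by apply: ler_wpM2l; [rewrite mulr_ge0 | exact: cross_le_1Bgamma].
have s2 : (1 - gam) * Bmat R A i j <= (1 - gam) * (3 / 2 * n%:R * p ^+ 2).
  by apply: ler_wpM2l.
have -> : (1 - gam) / m%:R = (dnorm n m p)^-1 * ((1 - gam) * (3 / 2 * n%:R * p ^+ 2)).
  rewrite /dnorm; field.
  by rewrite (lt0r_neq0 p_gt0) (lt0r_neq0 m_gt0) pnatr_eq0 -lt0n n_gt0.
by apply: ler_wpM2l (le_trans s1 s2); rewrite invr_ge0 ltW.
Qed.

Lemma Pstar_offE i j : i != j -> P i j = Po i j.
Proof. by move=> ij; rewrite mxE (negbTE ij). Qed.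

Lemma Pstar_diagE i : P i i = 1 - \sum_(k < m | k != i) Po i k.
Proof. by rewrite mxE eqxx. Qed.

Lemma Pstar_row1 i : \sum_j P i j = 1.
Proof.
rewrite (bigD1 i) //= Pstar_diagE.
rewrite (eq_bigr (Po i)); last by move=> k ki; rewrite Pstar_offE // eq_sym.
by rewrite subrK.
Qed.

Lemma Pstar_diag i : gam <= P i i.
Proof.
rewrite Pstar_diagE.
have : \sum_(k < m | k != i) Po i k <= \sum_(k < m | k != i) (1 - gam) / m%:R.
  by apply: ler_sum => k ki; apply: Poff_le; rewrite eq_sym.
have : \sum_(k < m | k != i) (1 - gam) / m%:R <= \sum_(k < m) (1 - gam) / m%:R.
  by rewrite [X in _ <= X](bigD1 i) //= lerDr divr_ge0 ?ler0n.
have -> : \sum_(k < m) (1 - gam) / m%:R = 1 - gam.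
  by rewrite sumr_const card_ord -[(1 - gam) / m%:R *+ m]mulr_natr divfK ?lt0r_neq0.
lra.
Qed.

Lemma Pstar_ge0 i j : 0 <= P i j.
Proof.
have [<-|ij] := eqVneq i j; first exact: le_trans (ltW gamma_gt0) (Pstar_diag i).
rewrite Pstar_offE //; apply: le_trans (Poff_ge ij).
by apply: divr_ge0; [exact: ltW gamma_gt0 | rewrite mulr_ge0 // ltW].
Qed.

Lemma Pstar_rev i j : w i * P i j = w j * P j i.
Proof.
have [->|ij] := eqVneq i j; first by [].
rewrite Pstar_offE // Pstar_offE 1?eq_sym // /Poff mulrCA [w j * _]mulrCA; congr (_ * _).
rewrite !mulr_sumr; apply: eq_bigr => l _.
by rewrite mulrCA cross_exp_rev [(A l j)%:R * _]mulrC mulrCA.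
Qed.

Lemma Pstar_off_stationary i j : i != j ->
  gam / (3 * expR (2 * kap)) * w j <= (\sum_k w k) * P i j.
Proof.
move=> ij; set K := expR (2 * kap); set W := \sum_k w k.
have K_gt0 : 0 < K := expR_gt0 _.
have mw : m%:R * w j <= K * W.
  rewrite /W mulr_sumr mulr_natl -[X in w j *+ X](card_ord m) -sumr_const.
  by apply: ler_sum => k _; exact: expR_beta_le.
have -> : gam / (3 * K) * w j = gam / (3 * m%:R) * (m%:R * w j / K).
  by field; rewrite !lt0r_neq0.
rewrite Pstar_offE // [W * _]mulrC; apply: ler_pM.
- by apply: divr_ge0; [exact: ltW gamma_gt0 | rewrite mulr_ge0 // ltW].
- apply: divr_ge0 (ltW K_gt0).
  exact: mulr_ge0 (ler0n _ _) (ltW (expR_gt0 _)).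
- exact: Poff_ge ij.
- by rewrite ler_pdivrMr // [W * _]mulrC.
Qed.

End RaschModel.

Theorem mainTheorem9 (R : realType) (n m : nat)
  (theta : 'I_n -> R) (beta : 'I_m -> R)
  (A : 'I_n -> 'I_m -> bool) (p : R) :
  (0 < n)%N -> (1 < m)%N ->
  0 < p -> p <= 1 ->
  eventA A p ->
  (exists s, eigen_seq (Pstar theta beta A p) s) /\
  (forall s, eigen_seq (Pstar theta beta A p) s ->
     spectral_gap_of m s >= gamma theta beta / (3 * expR (2 * kappa beta))).
Proof.
move=> n_gt0 m_gt1 p_gt0 _ hA.
have [ex gap] := reversible_spectral_gap m_gt1 (fun i => expR_gt0 (beta i))
  (Pstar_ge0 theta beta n_gt0 m_gt1 p_gt0 hA) (Pstar_row1 theta beta A p)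
  (Pstar_rev theta beta A p) (Pstar_diag theta beta n_gt0 m_gt1 p_gt0 hA)
  (Pstar_off_stationary theta beta n_gt0 m_gt1 p_gt0 hA).
split=> // s /gap; apply: le_trans.
by rewrite le_min lexx andbT (gap_bound_le_twice_gamma theta beta m_gt1).
Qed.
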